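(* Let $n$ training samples carry labels in $\{1,\dots,K\}$ with indicator matrix $F\in\mathbb{R}^{K\times n}$, $n_k$ samples in class $k$; let the basis $G_1,\dots,G_r$ ($r\le n$) be a subset of the training samples with $r_k\ge1$ basis vectors in class $k$, and let $F_{G_i}$ be the class indicator of $G_i$. Let $\tilde W\in\mathbb{R}^{r\times n}$ be entrywise nonnegative with every column summing to one, of full row rank, satisfying $\tilde W_{ij}=0$ whenever $F_{G_i}\neq F_j$, and let $\tilde W'=\tilde W+\Delta W$ for a matrix $\Delta W\in\mathbb{R}^{r\times n}$. Put $\xi=\|\tilde W^\dagger\|_2\|\Delta W\|_2$, $\delta=\|\Delta W\|_F/\|\tilde W\|_F$, $n_\rho=\sqrt{\max_kn_k/\min_kn_k}$, $r_\rho=\sqrt{\max_kr_k/\min_kr_k}$. Let $X=F\tilde W^\dagger$, $X'=F\tilde W'^\dagger$, let $\gamma=\|X\|_F^2\|\tilde W\|_F^2/\|X\tilde W\|_F^2$ be the spectral risk of the ideal case, and let $\epsilon'=\|F-X'\tilde W'\|_F^2/\|X'\tilde W'\|_F^2+1$ and $\gamma'=\|X'\|_F^2\|\tilde W'\|_F^2/\|X'\tilde W'\|_F^2$ be the fitting error and spectral risk of the perturbed case. If $\xi<1/n_\rho$, then $$\epsilon'\le\frac{n_\rho^2\xi^2}{(1-n_\rho\xi)^2}+1,\qquad \gamma'\le\gamma(1+\delta)^2\Big(\frac{1+r_\rho\xi}{1-n_\rho\xi}\Big)^2.$$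
   Context: The columns of $F$ are standard basis vectors of $\mathbb{R}^K$: $F_j=e_k$ iff sample $j$ is in class $k$. $\|\cdot\|_2$ of a matrix is the spectral norm; $M^\dagger$ is the Moore–Penrose pseudo-inverse (for $\tilde W$ of full row rank, $\tilde W^\dagger=\tilde W^T(\tilde W\tilde W^T)^{-1}$). $X$ and $X'$ are the least-squares solutions of $\min_X\|F-X\tilde W\|_F^2$ and $\min_X\|F-X\tilde W'\|_F^2$. *)

From HB Require Import structures.
From mathcomp Require Import all_boot all_order all_algebra.
From mathcomp Require Import classical_sets reals.
Set Implicit Arguments. Unset Strict Implicit. Unset Printing Implicit Defensive.
Import Order.TTheory GRing.Theory Num.Theory.
Local Open Scope ring_scope.

Definition frob (R : realType) (m n : nat) (A : 'M[R]_(m, n)) : R :=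
  Num.sqrt (\sum_(i < m) \sum_(j < n) A i j ^+ 2).

Definition specnorm (R : realType) (m n : nat) (A : 'M[R]_(m, n)) : R :=
  reals.sup [set frob (A *m x) | x in [set x : 'cV[R]_n | frob x <= 1]]%classic.

(* P is the Moore-Penrose pseudo-inverse of A (Penrose equations; unique). *)
Definition is_pinv (R : realType) (m n : nat) (A : 'M[R]_(m, n)) (P : 'M[R]_(n, m)) : Prop :=
  [/\ A *m P *m A = A, P *m A *m P = P, (A *m P)^T = A *m P & (P *m A)^T = P *m A].

Definition Fmat (R : realType) (K n : nat) (c : 'I_n -> 'I_K) : 'M[R]_(K, n) :=
  \matrix_(k < K, j < n) (c j == k)%:R.

Definition ncls (K n : nat) (c : 'I_n -> 'I_K) (k : 'I_K) : nat := #|[set j | c j == k]|.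
(* number of basis vectors (G_i = sample g i) in class k *)
Definition rcls (K n r : nat) (c : 'I_n -> 'I_K) (g : 'I_r -> 'I_n) (k : 'I_K) : nat :=
  #|[set i | c (g i) == k]|.

Definition natmax (K : nat) (a : 'I_K -> nat) : nat := \max_(k < K) a k.
Definition natmin (K : nat) (a : 'I_K -> nat) : nat :=
  \big[minn/natmax a]_(k < K) a k.
Definition ratio_rho (R : realType) (K : nat) (a : 'I_K -> nat) : R :=
  Num.sqrt ((natmax a)%:R / (natmin a)%:R).

(* Because the columns of W sum to one and W only links samples to basis vectors of
   their own class, F = F_G W with F_G the class indicator of the basis; full row rank
   gives W W^+ = 1, so X = F_G.  For W' = W + dW every Z satisfies
   (1 - xi) |Z| <= |W^+|_2 |Z W'|, hence W' W'^+ = 1 and P = W'^+ W' is an orthogonal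
   projection with X' W' = F P.  Then F - X' W' = - F_G dW (1 - P) has norm at most
   |dW|_2 |F_G| <= xi |F|, and Pythagoras |F|^2 = |X' W'|^2 + |F - X' W'|^2 yields the
   fitting bound.  For the spectral risk, (1 - xi) |X'| is bounded both by |F_G| and by
   |W^+|_2 |X' W'|, which together with Pythagoras gives
   (1 - xi) |X'| |F| <= (1 + xi) |F_G| |X' W'|; finally |W'| <= |W| + |dW|. *)

From HB Require Import structures.
From mathcomp Require Import all_boot all_order all_algebra.
From mathcomp Require Import classical_sets reals.
From mathcomp Require Import ring lra.
Set Implicit Arguments. Unset Strict Implicit. Unset Printing Implicit Defensive.
Import Order.TTheory GRing.Theory Num.Theory.
Local Open Scope ring_scope.

Section Frobenius.
Variable R : realType.
Implicit Types m n p : nat.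

Definition frobdot m n (A B : 'M[R]_(m, n)) : R := \tr (A *m B^T).

Lemma frob_ge0 m n (A : 'M[R]_(m, n)) : 0 <= frob A.
Proof. exact: sqrtr_ge0. Qed.

Lemma frob_sqE m n (A : 'M[R]_(m, n)) :
  frob A ^+ 2 = \sum_(i < m) \sum_(j < n) A i j ^+ 2.
Proof.
by rewrite sqr_sqrtr //; apply: sumr_ge0 => i _; apply: sumr_ge0 => j _; apply: sqr_ge0.
Qed.

Lemma frob_sq_dot m n (A : 'M[R]_(m, n)) : frob A ^+ 2 = frobdot A A.
Proof.
rewrite frob_sqE /frobdot /mxtrace; apply: eq_bigr => i _; rewrite !mxE.
by apply: eq_bigr => j _; rewrite !mxE expr2.
Qed.

Lemma frob_sqrt_dot m n (A : 'M[R]_(m, n)) : frob A = Num.sqrt (frobdot A A).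
Proof. by rewrite -frob_sq_dot sqrtr_sqr ger0_norm ?frob_ge0. Qed.

Lemma frobdotC m n (A B : 'M[R]_(m, n)) : frobdot A B = frobdot B A.
Proof. by rewrite /frobdot -mxtrace_tr trmx_mul trmxK. Qed.

Lemma frobdotDl m n (A B C : 'M[R]_(m, n)) :
  frobdot (A + B) C = frobdot A C + frobdot B C.
Proof. by rewrite /frobdot mulmxDl mxtraceD. Qed.

Lemma frobdotZl m n a (A B : 'M[R]_(m, n)) : frobdot (a *: A) B = a * frobdot A B.
Proof. by rewrite /frobdot -scalemxAl mxtraceZ. Qed.

Lemma frob_eq0 m n (A : 'M[R]_(m, n)) : frob A = 0 -> A = 0.
Proof.
move=> A0; have sq0 : \sum_(i < m) \sum_(j < n) A i j ^+ 2 = 0.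
  by rewrite -frob_sqE A0 expr0n.
apply/matrixP => i j; rewrite mxE; apply/eqP; rewrite -sqrf_eq0; apply/eqP.
have row0 : \sum_(j < n) A i j ^+ 2 = 0.
  by apply: psumr_eq0P sq0 i isT => i' _; apply: sumr_ge0 => j' _; apply: sqr_ge0.
by apply: psumr_eq0P row0 j isT => j' _; apply: sqr_ge0.
Qed.

Lemma frob0 m n : frob (0 : 'M[R]_(m, n)) = 0.
Proof.
by rewrite /frob big1 ?sqrtr0 // => i _; rewrite big1 // => j _; rewrite mxE expr0n.
Qed.

Lemma frobZ m n a (A : 'M[R]_(m, n)) : frob (a *: A) = `|a| * frob A.
Proof.
rewrite !frob_sqrt_dot frobdotZl frobdotC frobdotZl mulrA -expr2.
by rewrite sqrtrM ?sqr_ge0 // sqrtr_sqr.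
Qed.

Lemma frobN m n (A : 'M[R]_(m, n)) : frob (- A) = frob A.
Proof. by rewrite -scaleN1r frobZ normrN normr1 mul1r. Qed.

Lemma frob_tr m n (A : 'M[R]_(m, n)) : frob A^T = frob A.
Proof. by rewrite !frob_sqrt_dot /frobdot trmxK mxtrace_mulC. Qed.

Lemma frobD_sq m n (A B : 'M[R]_(m, n)) :
  frob (A + B) ^+ 2 = frob A ^+ 2 + frob B ^+ 2 + 2 * frobdot A B.
Proof.
rewrite !frob_sq_dot !frobdotDl ![frobdot _ (A + B)]frobdotC !frobdotDl.
by rewrite (frobdotC B A); ring.
Qed.

Lemma frobdot_le m n (A B : 'M[R]_(m, n)) : frobdot A B <= frob A * frob B.
Proof.
have [/frob_eq0 ->|A0] := eqVneq (frob A) 0.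
  by rewrite /frobdot mul0mx mxtrace0 frob0 mul0r.
have [/frob_eq0 ->|B0] := eqVneq (frob B) 0.
  by rewrite /frobdot trmx0 mulmx0 mxtrace0 frob0 mulr0.
have a_gt0 : 0 < frob A by rewrite lt_def A0 frob_ge0.
have b_gt0 : 0 < frob B by rewrite lt_def B0 frob_ge0.
have := sqr_ge0 (frob (frob B *: A + (- frob A) *: B)).
rewrite frobD_sq !frobZ frobdotZl frobdotC frobdotZl frobdotC !exprMn !real_normK ?num_real //.
move=> expansion_ge0; rewrite -subr_ge0 -(pmulr_rge0 _ (mulr_gt0 a_gt0 b_gt0)); nra.
Qed.

Lemma frobdot_norm_le m n (A B : 'M[R]_(m, n)) : `|frobdot A B| <= frob A * frob B.
Proof.
rewrite ler_norml frobdot_le andbT lerNl -mulN1r -frobdotZl scaleN1r.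
by rewrite -[frob A](frobN A) frobdot_le.
Qed.

Lemma frobD_le m n (A B : 'M[R]_(m, n)) : frob (A + B) <= frob A + frob B.
Proof.
rewrite -(@ler_pXn2r _ 2) ?nnegrE ?addr_ge0 ?frob_ge0 //.
by rewrite frobD_sq sqrrD; have := frobdot_le A B; lra.
Qed.

Lemma frobB_le m n (A B : 'M[R]_(m, n)) : frob (A - B) <= frob A + frob B.
Proof. by rewrite -(frobN B) frobD_le. Qed.

Lemma frob_sq_rows m n (A : 'M[R]_(m, n)) :
  frob A ^+ 2 = \sum_(i < m) frob (row i A) ^+ 2.
Proof.
rewrite frob_sqE; apply: eq_bigr => i _; rewrite frob_sqE big_ord1.
by apply: eq_bigr => j _; rewrite mxE.
Qed.

Lemma frob_mulmx_le m n p (A : 'M[R]_(m, n)) (B : 'M[R]_(n, p)) :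
  frob (A *m B) <= frob A * frob B.
Proof.
rewrite -(@ler_pXn2r _ 2) ?nnegrE ?mulr_ge0 ?frob_ge0 // exprMn.
rewrite frob_sq_rows frob_sq_rows mulr_suml; apply: ler_sum => i _.
rewrite -(frob_tr B) (frob_sq_rows B^T) mulr_sumr frob_sqE big_ord1; apply: ler_sum => j _.
have -> : row i (A *m B) 0 j = frobdot (row i A) (row j B^T).
  by rewrite /frobdot mxE /mxtrace big_ord1 !mxE; apply: eq_bigr => k _; rewrite !mxE.
rewrite -real_normK ?num_real // -exprMn.
by rewrite lerXn2r ?nnegrE ?normr_ge0 ?mulr_ge0 ?frob_ge0 // frobdot_norm_le.
Qed.

Lemma frob_proj_sq m n (M : 'M[R]_(m, n)) (P : 'M[R]_n) :
  P^T = P -> P *m P = P -> frob M ^+ 2 = frob (M *m P) ^+ 2 + frob (M - M *m P) ^+ 2.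
Proof.
move=> PT PP; transitivity (frob (M *m P + (M - M *m P)) ^+ 2).
  by rewrite addrC subrK.
rewrite (frobD_sq (M *m P)).
suff -> : frobdot (M *m P) (M - M *m P) = 0 by rewrite mulr0 addr0.
rewrite /frobdot raddfB /= trmx_mul PT mulmxBr mulmxA -(mulmxA M P P) PP.
by rewrite subrr mxtrace0.
Qed.

Lemma frob_proj_le m n (M : 'M[R]_(m, n)) (P : 'M[R]_n) :
  P^T = P -> P *m P = P -> frob (M *m P) <= frob M.
Proof.
move=> PT PP; rewrite -(@ler_pXn2r _ 2) ?nnegrE ?frob_ge0 // (frob_proj_sq M PT PP).
by rewrite lerDl sqr_ge0.
Qed.

Lemma frob_projC_le m n (M : 'M[R]_(m, n)) (P : 'M[R]_n) :
  P^T = P -> P *m P = P -> frob (M - M *m P) <= frob M.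
Proof.
move=> PT PP; rewrite -(@ler_pXn2r _ 2) ?nnegrE ?frob_ge0 // (frob_proj_sq M PT PP).
by rewrite lerDr sqr_ge0.
Qed.

End Frobenius.

Section SpectralNorm.
Variable R : realType.

Lemma specnorm_ub m n (A : 'M[R]_(m, n)) (x : 'cV[R]_n) :
  frob x <= 1 -> frob (A *m x) <= specnorm A.
Proof.
move=> x1; apply: ub_le_sup; last by exists x.
exists (frob A) => _ [y /= y1 <-]; apply: le_trans (frob_mulmx_le _ _) _.
by rewrite ler_piMr ?frob_ge0.
Qed.

Lemma specnorm_ge0 m n (A : 'M[R]_(m, n)) : 0 <= specnorm A.
Proof. by rewrite -(frob0 R m 1) -(mulmx0 _ A) specnorm_ub // frob0. Qed.

Lemma frob_mulmx_specnorm_cV_le m n (A : 'M[R]_(m, n)) (x : 'cV[R]_n) :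
  frob (A *m x) <= specnorm A * frob x.
Proof.
have [/frob_eq0 ->|x0] := eqVneq (frob x) 0; first by rewrite mulmx0 !frob0 mulr0.
have x_gt0 : 0 < frob x by rewrite lt_def x0 frob_ge0.
have := @specnorm_ub _ _ A ((frob x)^-1 *: x).
rewrite -scalemxAr !frobZ ger0_norm ?invr_ge0 ?frob_ge0 // mulVf // lexx.
by rewrite -ler_pdivlMl ?invr_gt0 // invrK mulrC => /(_ isT).
Qed.

(* [specnorm] is defined through column vectors; [|u A|^2 = <u, A (u A)^T>] reduces
   row vectors to that case. *)
Lemma frob_mulmx_specnorm_rV_le m n (A : 'M[R]_(m, n)) (u : 'rV[R]_m) :
  frob (u *m A) <= specnorm A * frob u.
Proof.
set v := u *m A.
have [v0|v_gt0] := eqVneq (frob v) 0; first by rewrite v0 mulr_ge0 ?specnorm_ge0 ?frob_ge0.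
have {}v_gt0 : 0 < frob v by rewrite lt_def v_gt0 frob_ge0.
rewrite -(ler_pM2l v_gt0) -expr2 frob_sq_dot.
have -> : frobdot v v = frobdot u (A *m v^T)^T by rewrite /frobdot trmxK /v mulmxA.
apply: le_trans (frobdot_le _ _) _; rewrite frob_tr mulrCA mulrA mulrC.
by rewrite ler_wpM2r ?frob_ge0 // -(frob_tr v) frob_mulmx_specnorm_cV_le.
Qed.

Lemma frob_mulmx_specnorm_le k m n (Z : 'M[R]_(k, m)) (A : 'M[R]_(m, n)) :
  frob (Z *m A) <= specnorm A * frob Z.
Proof.
rewrite -(@ler_pXn2r _ 2) ?nnegrE ?mulr_ge0 ?specnorm_ge0 ?frob_ge0 //.
rewrite exprMn !frob_sq_rows mulr_sumr; apply: ler_sum => i _.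
rewrite row_mul -exprMn lerXn2r ?nnegrE ?mulr_ge0 ?specnorm_ge0 ?frob_ge0 //.
exact: frob_mulmx_specnorm_rV_le.
Qed.

End SpectralNorm.

Section ScalarBounds.
Variable R : realType.

Lemma fit_ratio_le (e t x x' : R) :
  0 <= x <= x' -> x' < 1 -> e ^+ 2 <= x ^+ 2 * (t ^+ 2 + e ^+ 2) ->
  e ^+ 2 / t ^+ 2 <= x' ^+ 2 / (1 - x') ^+ 2.
Proof.
move=> /andP[x_ge0 x_le] x'_lt1 e_le.
have [->|t_neq0] := eqVneq (t ^+ 2) 0; first by rewrite invr0 mulr0 divr_ge0 ?sqr_ge0.
have t_gt0 : 0 < t ^+ 2 by rewrite lt_def t_neq0 sqr_ge0.
rewrite ler_pdivrMr // mulrAC ler_pdivlMr ?exprn_gt0 ?subr_gt0 //.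
have sub_le : (1 - x') ^+ 2 <= 1 - x ^+ 2 by nra.
have x2_le : x ^+ 2 <= x' ^+ 2 by rewrite lerXn2r ?nnegrE // (le_trans x_ge0).
have := ler_wpM2l (sqr_ge0 e) sub_le; have := ler_wpM2r (ltW t_gt0) x2_le; lra.
Qed.

Lemma growth_factor_le (x nr rr : R) :
  0 <= x -> 1 <= nr -> 1 <= rr -> nr * x < 1 ->
  (1 + x) / (1 - x) <= (1 + rr * x) / (1 - nr * x).
Proof.
move=> x_ge0 nr_ge1 rr_ge1 nrx_lt1; have x_lt1 : x < 1 by nra.
rewrite ler_pdivrMr ?subr_gt0 // mulrAC ler_pdivlMr ?subr_gt0 //.
(* the difference of the two sides is [x (rr - 1) (1 - x) + x (nr - 1) (1 + x)] *)
have : 0 <= x * (rr - 1) * (1 - x) by rewrite !mulr_ge0 ?subr_ge0 // ltW.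
have : 0 <= x * (nr - 1) * (1 + x) by rewrite !mulr_ge0 ?subr_ge0 ?addr_ge0.
lra.
Qed.

Lemma mulr_hypot_le (m a t f p d : R) :
  0 <= m -> 0 <= a -> 0 <= t -> 0 <= f -> 0 <= p -> 0 <= d ->
  m <= a -> m <= p * t -> f ^+ 2 <= t ^+ 2 + (d * a) ^+ 2 ->
  m * f <= (1 + p * d) * a * t.
Proof.
move=> m_ge0 a_ge0 t_ge0 f_ge0 p_ge0 d_ge0 ma_le mt_le f_le.
have pd_ge0 : 0 <= p * d by rewrite mulr_ge0.
rewrite -(@ler_pXn2r _ 2) ?nnegrE ?mulr_ge0 ?addr_ge0 //.
have m2_le : m ^+ 2 * f ^+ 2 <= m ^+ 2 * t ^+ 2 + (p * d) ^+ 2 * (a ^+ 2 * t ^+ 2).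
  apply: le_trans (ler_wpM2l (sqr_ge0 m) f_le) _.
  have -> : (p * d) ^+ 2 * (a ^+ 2 * t ^+ 2) = (p * t) ^+ 2 * (d * a) ^+ 2 by ring.
  by rewrite mulrDr lerD2l ler_wpM2r ?sqr_ge0 // lerXn2r ?nnegrE // mulr_ge0.
have : m ^+ 2 * t ^+ 2 <= a ^+ 2 * t ^+ 2 by rewrite ler_wpM2r ?sqr_ge0 // lerXn2r.
have : 0 <= p * d * (a ^+ 2 * t ^+ 2) by rewrite !mulr_ge0 ?sqr_ge0.
rewrite !exprMn sqrrD; lra.
Qed.

Lemma spectral_cross_le (y a t f p d nr rr : R) :
  0 <= y -> 0 <= a -> 0 <= t -> 0 <= f -> 0 <= p -> 0 <= d ->
  1 <= nr -> 1 <= rr -> nr * (p * d) < 1 ->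
  (1 - p * d) * y <= a -> (1 - p * d) * y <= p * t ->
  f ^+ 2 <= t ^+ 2 + (d * a) ^+ 2 ->
  y * f <= (1 + rr * (p * d)) / (1 - nr * (p * d)) * a * t.
Proof.
move=> y_ge0 a_ge0 t_ge0 f_ge0 p_ge0 d_ge0 nr_ge1 rr_ge1 nrx_lt1 ya_le yt_le f_le.
have x_ge0 : 0 <= p * d by rewrite mulr_ge0.
have subx_gt0 : 0 < 1 - p * d by rewrite subr_gt0; nra.
have cross_le := mulr_hypot_le (mulr_ge0 (ltW subx_gt0) y_ge0) a_ge0 t_ge0 f_ge0
  p_ge0 d_ge0 ya_le yt_le f_le.
set q := _ / _.
have q_ge : 1 + p * d <= (1 - p * d) * q.
  by rewrite [_ * q]mulrC -ler_pdivrMr // growth_factor_le.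
clearbody q; rewrite -(ler_pM2l subx_gt0) [_ * (y * f)]mulrA.
apply: le_trans cross_le _.
by rewrite -!mulrA [leRHS]mulrA ler_wpM2r ?mulr_ge0.
Qed.

Lemma spectral_risk_le (y t a f w w' dw q : R) :
  0 <= y -> 0 <= t -> 0 <= a -> 0 <= w -> 0 <= dw -> 0 <= w' -> 0 <= q ->
  t <= f -> f <= a * w -> w' <= w + dw -> y * f <= q * a * t ->
  y ^+ 2 * w' ^+ 2 / t ^+ 2 <= a ^+ 2 * w ^+ 2 / f ^+ 2 * (1 + dw / w) ^+ 2 * q ^+ 2.
Proof.
move=> y_ge0 t_ge0 a_ge0 w_ge0 dw_ge0 w'_ge0 q_ge0 t_le f_le w'_le yf_le.
have [->|t_neq0] := eqVneq t 0.
  by rewrite expr0n /= invr0 mulr0 ?(sqr_ge0, invr_ge0, mulr_ge0).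
have t_gt0 : 0 < t by rewrite lt_def t_neq0.
have f_gt0 : 0 < f := lt_le_trans t_gt0 t_le.
have w_gt0 : 0 < w by rewrite lt_def w_ge0 andbT; apply/eqP => w0; move: f_le; rewrite w0; lra.
have -> : a ^+ 2 * w ^+ 2 / f ^+ 2 * (1 + dw / w) ^+ 2 * q ^+ 2
        = (q * a * t * (w + dw)) ^+ 2 / f ^+ 2 / t ^+ 2.
  by field; rewrite !gt_eqF.
rewrite ler_pM2r ?invr_gt0 ?exprn_gt0 // ler_pdivlMr ?exprn_gt0 //.
have f_ge0 := ltW f_gt0.
rewrite -!exprMn mulrAC lerXn2r ?nnegrE ?mulr_ge0 ?addr_ge0 //.
by apply: ler_pM; rewrite ?mulr_ge0.
Qed.

End ScalarBounds.

Section Perturbation.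
Variables (R : realType) (k r n : nat).
Variables (A E : 'M[R]_(r, n)) (Ap Bp : 'M[R]_(n, r)).
Hypothesis A_Ap : A *m Ap = 1%:M.

Local Notation x := (specnorm Ap * specnorm E).

Lemma frob_mulmx_perturbed_ge p (Z : 'M[R]_(p, r)) :
  (1 - x) * frob Z <= specnorm Ap * frob (Z *m (A + E)).
Proof.
have Z_le : frob Z <= specnorm Ap * frob (Z *m A).
  by rewrite -{1}[Z]mulmx1 -A_Ap mulmxA frob_mulmx_specnorm_le.
have ZA_le : frob (Z *m A) <= frob (Z *m (A + E)) + specnorm E * frob Z.
  rewrite -[A in Z *m A](addrK E) mulmxBr.
  by apply: le_trans (frobB_le _ _) _; rewrite lerD2l frob_mulmx_specnorm_le.
have := ler_wpM2l (specnorm_ge0 Ap) ZA_le; lra.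
Qed.

Hypothesis Bp_pinv : is_pinv (A + E) Bp.
Hypothesis x_lt1 : x < 1.

Let subx_gt0 : 0 < 1 - x. Proof. by rewrite subr_gt0. Qed.

Lemma mulmx_pinv_perturbed : (A + E) *m Bp = 1%:M.
Proof.
have [B_Bp_B _ _ _] := Bp_pinv.
have := frob_mulmx_perturbed_ge ((A + E) *m Bp - 1%:M).
rewrite mulmxBl B_Bp_B mul1mx subrr frob0 mulr0 => Z_le.
have /frob_eq0/eqP : frob ((A + E) *m Bp - 1%:M) = 0.
  by apply/eqP; rewrite eq_le frob_ge0 andbT -(pmulr_rle0 _ subx_gt0).
by rewrite subr_eq0 => /eqP.
Qed.

Local Notation P := (Bp *m (A + E)).

Lemma pinv_proj_tr : P^T = P.
Proof. by case: Bp_pinv. Qed.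

Lemma pinv_proj_idem : P *m P = P.
Proof. by rewrite mulmxA -(mulmxA Bp) mulmx_pinv_perturbed mulmx1. Qed.

Variables (G : 'M[R]_(k, r)) (F : 'M[R]_(k, n)).
Hypothesis FE : F = G *m A.

Lemma frob_left_factor_le : frob G <= specnorm Ap * frob F.
Proof. by rewrite -[G]mulmx1 -A_Ap mulmxA -FE frob_mulmx_specnorm_le. Qed.

Lemma frob_mulmx_pinv_perturbed_le : (1 - x) * frob (F *m Bp) <= frob G.
Proof.
have FBpE : F *m Bp = G - G *m E *m Bp.
  rewrite FE -[A in G *m A](addrK E) mulmxBr mulmxBl -mulmxA mulmx_pinv_perturbed.
  by rewrite mulmx1.
have GEBp_le : (1 - x) * frob (G *m E *m Bp) <= x * frob G.
  apply: le_trans (frob_mulmx_perturbed_ge _) _; rewrite -mulrA ler_wpM2l ?specnorm_ge0 //.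
  rewrite -mulmxA; apply: le_trans (frob_proj_le _ pinv_proj_tr pinv_proj_idem) _.
  exact: frob_mulmx_specnorm_le.
have := ler_wpM2l (ltW subx_gt0) (frobB_le G (G *m E *m Bp)).
rewrite FBpE; lra.
Qed.

Local Notation fit := (F *m Bp *m (A + E)).

Lemma frob_fit_split : frob F ^+ 2 = frob fit ^+ 2 + frob (F - fit) ^+ 2.
Proof. by rewrite -mulmxA (frob_proj_sq F pinv_proj_tr pinv_proj_idem). Qed.

(* [F - F P = - G E (1 - P)], because [(A + E) P = A + E]. *)
Lemma frob_fit_residual_le : frob (F - fit) <= specnorm E * frob G.
Proof.
have -> : F - fit = - (G *m E - G *m E *m P).
  have [B_Bp_B _ _ _] := Bp_pinv.
  rewrite FE -[A in G *m A](addrK E) !mulmxBr !mulmxBl -!mulmxA.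
  by rewrite (mulmxA (A + E)) B_Bp_B opprB addrC subrKA opprB.
rewrite frobN; apply: le_trans (frob_projC_le _ pinv_proj_tr pinv_proj_idem) _.
exact: frob_mulmx_specnorm_le.
Qed.

Lemma fit_error_le nr : 1 <= nr -> nr * x < 1 ->
  frob (F - fit) ^+ 2 / frob fit ^+ 2 <= (nr * x) ^+ 2 / (1 - nr * x) ^+ 2.
Proof.
move=> nr_ge1 nrx_lt1; have x_ge0 : 0 <= x by rewrite mulr_ge0 ?specnorm_ge0.
apply: (fit_ratio_le (x := x)) nrx_lt1 _; first by rewrite x_ge0 ler_peMl.
have e_le : frob (F - fit) <= x * frob F.
  apply: le_trans frob_fit_residual_le _.
  by rewrite [specnorm Ap * _]mulrC -mulrA ler_wpM2l ?specnorm_ge0 ?frob_left_factor_le.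
by rewrite -frob_fit_split -exprMn ler_pXn2r ?nnegrE ?frob_ge0 ?(mulr_ge0 x_ge0 (frob_ge0 F)).
Qed.

Lemma spectral_risk_perturbed_le nr rr : 1 <= nr -> 1 <= rr -> nr * x < 1 ->
  frob (F *m Bp) ^+ 2 * frob (A + E) ^+ 2 / frob fit ^+ 2 <=
  frob G ^+ 2 * frob A ^+ 2 / frob F ^+ 2 * (1 + frob E / frob A) ^+ 2 *
    ((1 + rr * x) / (1 - nr * x)) ^+ 2.
Proof.
move=> nr_ge1 rr_ge1 nrx_lt1; have x_ge0 : 0 <= x by rewrite mulr_ge0 ?specnorm_ge0.
apply: spectral_risk_le; rewrite ?frob_ge0 //.
- by apply: divr_ge0; nra.
- by rewrite -(ler_pXn2r (ltn0Sn 1)) ?nnegrE ?frob_ge0 // frob_fit_split lerDl sqr_ge0.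
- by rewrite FE frob_mulmx_le.
- exact: frobD_le.
apply: spectral_cross_le; rewrite ?frob_ge0 ?specnorm_ge0 //.
- exact: frob_mulmx_pinv_perturbed_le.
- exact: frob_mulmx_perturbed_ge.
rewrite frob_fit_split lerD2l ler_pXn2r ?nnegrE ?mulr_ge0 ?specnorm_ge0 ?frob_ge0 //.
exact: frob_fit_residual_le.
Qed.

End Perturbation.

Section ClassCounts.
Variable R : realType.

Lemma Fmat_mulmx K n r (c : 'I_n -> 'I_K) (b : 'I_r -> 'I_K) (W : 'M[R]_(r, n)) :
  (forall j, \sum_(i < r) W i j = 1) -> (forall i j, b i != c j -> W i j = 0) ->
  Fmat R c = Fmat R b *m W.
Proof.
move=> W_sum W_cls; apply/matrixP => k j; rewrite !mxE; under eq_bigr do rewrite mxE.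
have [<-|cjk] := eqVneq (c j) k.
  transitivity (\sum_(i < r) W i j); first by rewrite W_sum.
  apply: eq_bigr => i _.
  by have [_|/W_cls ->] := eqVneq (b i) (c j); rewrite ?mul1r ?mulr0.
rewrite big1 // => i _; have [bik|_] := eqVneq (b i) k; last by rewrite mul0r.
by rewrite W_cls ?mulr0 // bik eq_sym.
Qed.

Lemma rcls_le_ncls K n r (c : 'I_n -> 'I_K) (g : 'I_r -> 'I_n) k :
  injective g -> (rcls c g k <= ncls c k)%N.
Proof.
move=> g_inj; rewrite /rcls /ncls -(card_imset _ g_inj); apply: subset_leq_card.
by apply/fintype.subsetP => _ /imsetP[i + ->]; rewrite !inE.
Qed.

Lemma ratio_rho_ge1 K (a : 'I_K -> nat) :
  (0 < K)%N -> (forall k, 0 < a k)%N -> 1 <= ratio_rho R a.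
Proof.
move=> K_gt0 a_gt0; pose k0 := Ordinal K_gt0.
have min_le_max : (natmin a <= natmax a)%N.
  by apply: (big_ind (fun v => v <= natmax a)%N) => // [u v u_le _|k _];
    [rewrite geq_min u_le | exact: leq_bigmax].
have min_gt0 : (0 < natmin a)%N.
  apply: (big_ind (fun v => 0 < v)%N) => [|u v|k _]; rewrite ?leq_min => //.
    exact: leq_trans (a_gt0 k0) (leq_bigmax k0).
  by move=> -> ->.
rewrite -sqrtr1 ler_sqrt ?divr_ge0 // ler_pdivlMr ?ltr0n // mul1r ler_nat.
exact: min_le_max.
Qed.

Lemma ratio_rho_ord0 (a : 'I_0 -> nat) : ratio_rho R a = 0.
Proof. by rewrite /ratio_rho /natmax big_ord0 mul0r sqrtr0. Qed.

End ClassCounts.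

Unset Implicit Arguments.

Theorem theorem5 (R : realType) (K n r : nat)
  (c : 'I_n -> 'I_K) (g : 'I_r -> 'I_n)
  (W dW : 'M[R]_(r, n)) (Wp Wp' : 'M[R]_(n, r)) :
  injective g -> (r <= n)%N ->
  (forall k : 'I_K, (1 <= rcls c g k)%N) ->
  (forall i j, 0 <= W i j) ->
  (forall j, \sum_(i < r) W i j = 1) ->
  row_free W ->
  (forall i j, c (g i) != c j -> W i j = 0) ->
  is_pinv W Wp -> is_pinv (W + dW) Wp' ->
  let F := Fmat R c in
  let W' := W + dW in
  let xi := specnorm Wp * specnorm dW in
  let delta := frob dW / frob W in
  let n_rho := ratio_rho R (ncls c) in
  let r_rho := ratio_rho R (rcls c g) in
  let X := F *m Wp in
  let X' := F *m Wp' in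
  let gamma := frob X ^+ 2 * frob W ^+ 2 / frob (X *m W) ^+ 2 in
  let eps' := frob (F - X' *m W') ^+ 2 / frob (X' *m W') ^+ 2 + 1 in
  let gamma' := frob X' ^+ 2 * frob W' ^+ 2 / frob (X' *m W') ^+ 2 in
  xi < 1 / n_rho ->
  eps' <= n_rho ^+ 2 * xi ^+ 2 / (1 - n_rho * xi) ^+ 2 + 1 /\
  gamma' <= gamma * (1 + delta) ^+ 2 * ((1 + r_rho * xi) / (1 - n_rho * xi)) ^+ 2.
Proof.
move=> g_inj _ rcls_gt0 _ W_sum W_free W_cls [W_Wp_W _ _ _] Wp'_pinv.
move=> F W' xi delta n_rho r_rho X X' gamma eps' gamma' xi_lt.
have xi_ge0 : 0 <= xi by rewrite mulr_ge0 ?specnorm_ge0.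
have [K0|K_gt0] := posnP K.
  by subst K; move: xi_lt; rewrite /n_rho ratio_rho_ord0 mul1r invr0; lra.
have n_rho_ge1 : 1 <= n_rho.
  by apply: ratio_rho_ge1 => // k; rewrite (leq_trans (rcls_gt0 k)) // rcls_le_ncls.
have r_rho_ge1 : 1 <= r_rho by exact: ratio_rho_ge1.
have nxi_lt1 : n_rho * xi < 1 by rewrite mulrC -ltr_pdivlMr ?(lt_le_trans ltr01) // mul1r.
have xi_lt1 : xi < 1 by apply: le_lt_trans nxi_lt1; rewrite ler_peMl.
pose G := Fmat R (fun i => c (g i)).
have FE : F = G *m W := Fmat_mulmx W_sum W_cls.
have W_Wp : W *m Wp = 1%:M by apply: (row_free_inj W_free); rewrite mul1mx.
have XE : X = G by rewrite /X FE -mulmxA W_Wp mulmx1.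
split.
  by rewrite lerD2r -exprMn (fit_error_le W_Wp Wp'_pinv xi_lt1 FE).
rewrite /gamma' /gamma /delta XE -FE.
exact: (spectral_risk_perturbed_le W_Wp Wp'_pinv xi_lt1 FE).
Qed.
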